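(* Let $F$, $H$, $X$, $\Omega$, $Q$ and the sequences $(x_k),(w_k),(w'_k),(y_k)$ be as described in the context (generated by the IneIREG method). Suppose the regularization parameters are $\eta_k=\eta_0/(k+1)^b$ for all $k\ge 0$, with $0<\eta_0\le 1$ and $0<b<1$. Suppose also that $\alpha_0\in[0,1]$ and the sequence $(\alpha_k/\eta_k)_{k\ge0}$ is nonincreasing; that $\lambda_k\in[\underline\lambda,\overline\lambda]$ for all $k\ge0$, where $0<\underline\lambda\le\overline\lambda\le 1/(L_F+\eta_0L_H)$; and that $s:=\sum_{k=0}^\infty \delta_k\eta_k^{-1}<+\infty$. For $k\ge1$ let $\Lambda_k=\sum_{j=0}^{k-1}\lambda_j$ and $\overline y_k=\Lambda_k^{-1}\sum_{j=0}^{k-1}\lambda_j y_j$. Then: (a) for all $k\ge1$, $$-B_H\,\mathrm{dist}(\overline y_k,Q)\le \mathrm{Gap}(\overline y_k,H,Q)\le \frac{1}{k^{1-b}}\Big(\frac{D_X^2}{2^{1-b}\underline\lambda\,\eta_0}\Big)+\frac1k\Big(\frac{s}{2\underline\lambda}\Big);$$ (b) for all $k\ge1$, $$0\le \mathrm{Gap}(\overline y_k,F,X)\le \frac1k\Big(\frac{D_X^2}{2\underline\lambda}\Big)+\frac1k\Big(\frac{s}{2\underline\lambda}\Big)+\frac{1}{k^b}\Big(\frac{\eta_0\overline\lambda C_HD_X}{(1-b)\underline\lambda}\Big);$$ (c) if $Q$ is $\sigma$-weakly sharp of order $\mathcal M\ge1$, then for all $k\ge1$, $$\mathrm{Gap}(\overline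 y_k,H,Q)\ge -\frac{B_H}{\sigma^{1/\mathcal M}}\Bigg(\frac1k\Big(\frac{D_X^2}{2\underline\lambda}\Big)+\frac1k\Big(\frac{s}{2\underline\lambda}\Big)+\frac{1}{k^b}\Big(\frac{\eta_0\overline\lambda C_HD_X}{(1-b)\underline\lambda}\Big)\Bigg)^{1/\mathcal M}.$$
   Context: Work in $\mathbb{R}^n$ with Euclidean inner product $\langle\cdot,\cdot\rangle$ and norm $\|\cdot\|$. The maps $F\colon \mathrm{Dom}\,F\to\mathbb{R}^n$ and $H\colon\mathrm{Dom}\,H\to\mathbb{R}^n$ are monotone and Lipschitz continuous with constants $L_F>0$ and $L_H>0$. $X$ is a nonempty compact convex set and $\Omega$ a nonempty closed convex set with $X\subset\Omega\subset\mathrm{Dom}\,F\cap\mathrm{Dom}\,H$; $P_X,P_\Omega$ denote orthogonal projections. $Q:=\{x\in X:\langle F(x),y-x\rangle\ge0\ \forall y\in X\}$ (solution set of VIP$(F,X)$) is assumed nonempty. $D_X:=\sup_{x,y\in X}\|x-y\|$, $C_H:=\sup_{x\in X}\|H(x)\|$, $B_H:=\sup_{x\in Q}\|H(x)\|$, and $\mathrm{dist}(y,Q)$ is the Euclidean distance from $y$ to $Q$. Dual gap functions: $\mathrm{Gap}(z,H,Q):=\sup_{x\in Q}\langle H(x),z-x\rangle$ and $\mathrm{Gap}(z,F,X):=\sup_{x\in X}\langle F(x),z-x\rangle$. $Q$ is $\sigma$-weakly sharp of order $\mathcal M\ge1$ ($\sigma>0$) if $\langle F(x),y-x\rangle\ge\sigma\,\mathrm{dist}(y,Q)^{\mathcal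 M}$ for all $x\in Q$, $y\in X$. IneIREG method: start with $x_0=x_{-1}\in X$; for $k=0,1,\dots$, with parameters $\alpha_k\ge0$, $\lambda_k>0$, $\eta_k>0$, set $w_k=x_k+\alpha_k(x_k-x_{k-1})$, $w'_k=P_\Omega(w_k)$, $y_k=P_X\big(w_k-\lambda_k(F(w'_k)+\eta_kH(w'_k))\big)$, $x_{k+1}=P_X\big(w_k-\lambda_k(F(y_k)+\eta_kH(y_k))\big)$. Also $\delta_k:=\alpha_k(1+\alpha_k)\|x_k-x_{k-1}\|^2$ for $k\ge0$. *)

From HB Require Import structures.
From mathcomp Require Import all_boot all_order all_algebra.
From mathcomp Require Import all_classical all_reals all_analysis.
Set Implicit Arguments. Unset Strict Implicit. Unset Printing Implicit Defensive.
Import Order.TTheory GRing.Theory Num.Theory.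
Import numFieldNormedType.Exports.
Local Open Scope classical_set_scope.
Local Open Scope ring_scope.

Section Defs.
Variables (R : realType) (n : nat).
Notation vec := 'rV[R]_n.

Definition dotp (u v : vec) : R := \sum_(i < n) u ord0 i * v ord0 i.
Definition enorm (u : vec) : R := Num.sqrt (dotp u u).

Definition is_projection (A : set vec) (p : vec -> vec) : Prop :=
  forall x, A (p x) /\ forall y, A y -> enorm (x - p x) <= enorm (x - y).

Definition monotone_map_on (D : set vec) (G : vec -> vec) : Prop :=
  forall x y, D x -> D y -> 0 <= dotp (G x - G y) (x - y).

Definition lipschitz_map_on (D : set vec) (G : vec -> vec) (L : R) : Prop :=
  forall x y, D x -> D y -> enorm (G x - G y) <= L * enorm (x - y).

Definition VIsol (G : vec -> vec) (A : set vec) : set vec :=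
  [set x | A x /\ forall y, A y -> 0 <= dotp (G x) (y - x)].

Definition diam (A : set vec) : R := sup [set enorm (p.1 - p.2) | p in A `*` A].
Definition supnorm (G : vec -> vec) (A : set vec) : R := sup [set enorm (G x) | x in A].
Definition distS (y : vec) (A : set vec) : R := inf [set enorm (y - q) | q in A].
Definition Gap (z : vec) (G : vec -> vec) (A : set vec) : R :=
  sup [set dotp (G x) (z - x) | x in A].

Definition weakly_sharp (G : vec -> vec) (A : set vec) (sigma M : R) : Prop :=
  forall x y, VIsol G A x -> A y -> sigma * (distS y (VIsol G A)) `^ M <= dotp (G x) (y - x).

(* IneIREG auxiliary sequences; x_{-1} = x_0 is encoded via k.-1 *)
Definition ineW (x : nat -> vec) (alpha : nat -> R) (k : nat) : vec :=
  x k + alpha k *: (x k - x k.-1).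
Definition ineDelta (x : nat -> vec) (alpha : nat -> R) (k : nat) : R :=
  alpha k * (1 + alpha k) * enorm (x k - x k.-1) ^+ 2.
Definition Lam (lambda : nat -> R) (k : nat) : R := \sum_(j < k) lambda j.
Definition ybar (lambda : nat -> R) (y : nat -> vec) (k : nat) : vec :=
  (Lam lambda k)^-1 *: \sum_(j < k) lambda j *: y j.
End Defs.

(* One extragradient step from the inertial point, combined with the two projection
   inequalities and the Lipschitz bound of [F + eta_k H], gives for every [x] in [X]
     |x_{k+1} - x|^2 <= (1 + a_k) |x_k - x|^2 - a_k |x_{k-1} - x|^2 + delta_k
                        - 2 lambda_k <F y_k + eta_k H y_k, y_k - x>.
   For [x] in [Q], monotonicity of [F] and [H] and the variational inequality at [x]
   leave [2 lambda_k eta_k <H x, y_k - x>] on the left; dividing by [eta_k] and summing,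
   the weights [1 / eta_k] telescope because [a_k / eta_k] is nonincreasing, so the sum
   is at most [D_X^2 / eta_{k-1} + s].  For [x] in [X] one keeps [<F x, y_k - x>]
   instead, bounds [- eta_k <H y_k, y_k - x>] by [eta_k C_H D_X] and uses
   [sum_{j<k} (j+1)^-b <= k^(1-b) / (1-b)].  Averaging with the weights [lambda_j]
   bounds [<H x, ybar_k - x>] and [<F x, ybar_k - x>], hence the gaps.  The lower bound
   in (a) is Cauchy-Schwarz against [B_H], and in (c) weak sharpness bounds
   [sigma dist(ybar_k, Q)^M] by the bound (b) on [<F q, ybar_k - q>] for [q] in [Q]. *)

From HB Require Import structures.
From mathcomp Require Import all_boot all_order all_algebra.
From mathcomp Require Import all_classical all_reals all_analysis.
From mathcomp Require Import ring lra.
Import Order.TTheory GRing.Theory Num.Theory.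
Import numFieldNormedType.Exports.
Local Open Scope classical_set_scope.
Local Open Scope ring_scope.
Set Implicit Arguments. Unset Strict Implicit. Unset Printing Implicit Defensive.

Section Euclidean.
Variables (R : realType) (n : nat).
Notation vec := 'rV[R]_n.
Implicit Types u v w : vec.

Lemma dotpC u v : dotp u v = dotp v u.
Proof. by apply: eq_bigr => i _; rewrite mulrC. Qed.

Lemma dotpDl u v w : dotp (u + v) w = dotp u w + dotp v w.
Proof. by rewrite /dotp -big_split; apply: eq_bigr => i _; rewrite mxE mulrDl. Qed.

Lemma dotpZl (a : R) u v : dotp (a *: u) v = a * dotp u v.
Proof. by rewrite /dotp mulr_sumr; apply: eq_bigr => i _; rewrite mxE mulrA. Qed.

Lemma dotpNl u v : dotp (- u) v = - dotp u v.
Proof. by rewrite -scaleN1r dotpZl mulN1r. Qed.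

Lemma dotpDr u v w : dotp w (u + v) = dotp w u + dotp w v.
Proof. by rewrite dotpC dotpDl !(dotpC w). Qed.

Lemma dotpZr (a : R) u v : dotp v (a *: u) = a * dotp v u.
Proof. by rewrite dotpC dotpZl dotpC. Qed.

Lemma dotpNr u v : dotp v (- u) = - dotp v u.
Proof. by rewrite dotpC dotpNl dotpC. Qed.

Lemma dotp0r u : dotp u 0 = 0.
Proof. by rewrite /dotp big1 // => i _; rewrite mxE mulr0. Qed.

Lemma dotp0l u : dotp 0 u = 0.
Proof. by rewrite dotpC dotp0r. Qed.

Lemma dotp_sumr (I : Type) (r : seq I) (P : pred I) (f : I -> vec) u :
  dotp u (\sum_(i <- r | P i) f i) = \sum_(i <- r | P i) dotp u (f i).
Proof. by elim/big_rec2: _ => [|i a b _ <-]; rewrite ?dotp0r ?dotpDr. Qed.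

Lemma dotpp_ge0 u : 0 <= dotp u u.
Proof. by apply: sumr_ge0 => i _; rewrite -expr2 sqr_ge0. Qed.

Lemma dotpp_eq0 u : dotp u u = 0 -> u = 0.
Proof.
move=> u0; apply/rowP => i; rewrite mxE; apply/eqP; rewrite -sqrf_eq0 expr2.
by apply/eqP; apply: (psumr_eq0P _ u0) => // j _; rewrite -expr2 sqr_ge0.
Qed.

Lemma enorm_ge0 u : 0 <= enorm u.
Proof. exact: sqrtr_ge0. Qed.

Lemma enorm_sqr u : enorm u ^+ 2 = dotp u u.
Proof. by rewrite sqr_sqrtr // dotpp_ge0. Qed.

Lemma enormN u : enorm (- u) = enorm u.
Proof. by rewrite /enorm dotpNl dotpNr opprK. Qed.

Lemma enormZ (a : R) u : enorm (a *: u) = `|a| * enorm u.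
Proof. by rewrite /enorm dotpZl dotpZr mulrA -expr2 sqrtrM ?sqr_ge0 // sqrtr_sqr. Qed.

Lemma enorm_le_dotp u (c : R) : 0 <= c -> dotp u u <= c ^+ 2 -> enorm u <= c.
Proof. by move=> c0 uc; rewrite -(ger0_norm c0) -sqrtr_sqr ler_sqrt // sqr_ge0. Qed.

Lemma dotp_le_of_enorm u v : enorm u <= enorm v -> dotp u u <= dotp v v.
Proof. by move=> uv; rewrite -!enorm_sqr !expr2 ler_pM ?enorm_ge0. Qed.

Lemma enorm_eq0 u : enorm u = 0 -> u = 0.
Proof. by move=> u0; apply: dotpp_eq0; rewrite -enorm_sqr u0 expr0n. Qed.

Lemma cauchy_schwarz u v : dotp u v <= enorm u * enorm v.
Proof.
have [/enorm_eq0->|u0] := eqVneq (enorm u) 0.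
  by rewrite dotp0l mulr_ge0 ?enorm_ge0.
have [/enorm_eq0->|v0] := eqVneq (enorm v) 0.
  by rewrite dotp0r mulr_ge0 ?enorm_ge0.
have uv0 : 0 < enorm u * enorm v by rewrite mulr_gt0 // lt0r ?u0 ?v0 enorm_ge0.
have := dotpp_ge0 (enorm v *: u - enorm u *: v).
rewrite dotpDl !dotpDr !(dotpNl, dotpNr, dotpZl, dotpZr) (dotpC v u) -!enorm_sqr.
by move=> h; rewrite -(ler_pM2l uv0); nra.
Qed.

Lemma abs_dotp_le u v : `|dotp u v| <= enorm u * enorm v.
Proof.
rewrite ler_norml cauchy_schwarz andbT lerNl -dotpNr -(enormN v).
exact: cauchy_schwarz.
Qed.

Lemma enormD_le u v : enorm (u + v) <= enorm u + enorm v.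
Proof.
apply: enorm_le_dotp; first by rewrite addr_ge0 ?enorm_ge0.
rewrite dotpDl !dotpDr (dotpC v u) sqrrD !enorm_sqr.
have := cauchy_schwarz u v; lra.
Qed.

Lemma enormB_le u v : enorm (u - v) <= enorm u + enorm v.
Proof. by rewrite -(enormN v) enormD_le. Qed.

Lemma enorm_le_mx_norm v : enorm v <= n%:R * `|v|.
Proof.
have entry_le i : `|v ord0 i| <= `|v|.
  change (`|v ord0 i| <= mx_norm v); rewrite mx_normrE.
  exact: (le_bigmax _ (fun ij : 'I_1 * 'I_n => `|v ij.1 ij.2|) (ord0, i)).
apply: enorm_le_dotp; first exact: mulr_ge0.
apply: (@le_trans _ _ (\sum_(i < n) `|v| * `|v|)).
  apply: ler_sum => i _; apply: (le_trans (ler_norm _)).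
  by rewrite normrM ler_pM.
rewrite sumr_const card_ord -expr2 -[`|v| ^+ 2 *+ n]mulr_natl exprMn.
apply: ler_wpM2r; first exact: sqr_ge0.
by have [->|n0] := posnP n; rewrite ?expr0n // ler_eXnr // ler1n.
Qed.

Lemma compact_enorm_bounded (A : set vec) :
  compact A -> exists M, forall v, A v -> enorm v <= M.
Proof.
move=> /compact_bounded /ex_strict_bound_gt0 [M M0 AM].
exists (n%:R * M) => v Av; apply: (le_trans (enorm_le_mx_norm v)).
by rewrite ler_wpM2l // ltW // AM.
Qed.

End Euclidean.

Ltac dotp_expand := rewrite ?(dotpDl, dotpDr, dotpNl, dotpNr, dotpZl, dotpZr).

Ltac vec_ring := apply/rowP => i; rewrite !mxE; ring.

Section Projection.
Variables (R : realType) (n : nat).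
Notation vec := 'rV[R]_n.
Variables (A : set vec) (P : vec -> vec).
Hypotheses (convA : convex_set A) (projP : is_projection A P).

Lemma proj_in z : A (P z).
Proof. by case: (projP z). Qed.

Lemma proj_variational z q : A q -> dotp (z - P z) (q - P z) <= 0.
Proof.
move=> Aq; have [Ap Pmin] := projP z.
set d := z - P z; set e := q - P z.
have segment t : 0 < t -> t < 1 -> 2 * dotp d e <= t * dotp e e.
  move=> t0 t1; pose tt : {i01 R} := Itv01 (ltW t0) (ltW t1).
  have /Pmin/dotp_le_of_enorm : A (t *: q + (1 - t) *: P z).
    by have := convA tt (mem_set Aq) (mem_set Ap); rewrite in_setE.
  have -> : z - (t *: q + (1 - t) *: P z) = d - t *: e by rewrite /d /e; vec_ring.
  rewrite -/d; clearbody d e; dotp_expand; rewrite (dotpC e d) => dte.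
  by rewrite -(ler_pM2l t0); lra.
rewrite leNgt; apply/negP => de0; have ee0 := dotpp_ge0 e.
(* [t = <d, e> / (|e|^2 + 2 <d, e>)] makes [t |e|^2 < 2 <d, e>] *)
have t0 : 0 < dotp d e / (dotp e e + 2 * dotp d e) by rewrite divr_gt0 //; lra.
have t1 : dotp d e / (dotp e e + 2 * dotp d e) < 1 by rewrite ltr_pdivrMr; lra.
by have := segment _ t0 t1; rewrite mulrAC ler_pdivlMr; nra.
Qed.

Lemma proj_dist_le z q : A q -> enorm (P z - q) <= enorm (z - q).
Proof.
move=> Aq; apply: enorm_le_dotp; rewrite ?enorm_ge0 // enorm_sqr.
have -> : z - q = (z - P z) - (q - P z) by vec_ring.
have -> : P z - q = - (q - P z) by vec_ring.
have := proj_variational z Aq; have := dotpp_ge0 (z - P z).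
by move: (z - P z) (q - P z) => d e; dotp_expand; rewrite (dotpC e d); lra.
Qed.

End Projection.

Section Extragradient.
Variables (R : realType) (n : nat).
Notation vec := 'rV[R]_n.

Lemma extragradient_three_point (z yv a xs g0 g1 : vec) (lam : R) :
  dotp (z - lam *: g1 - a) (xs - a) <= 0 ->
  dotp (z - lam *: g0 - yv) (a - yv) <= 0 ->
  2 * lam * dotp (g0 - g1) (a - yv) <=
    dotp (z - yv) (z - yv) + dotp (a - yv) (a - yv) ->
  dotp (a - xs) (a - xs) <= dotp (z - xs) (z - xs) - 2 * lam * dotp g1 (yv - xs).
Proof.
by dotp_expand; rewrite (dotpC yv z) (dotpC yv a) (dotpC xs a) (dotpC xs z); lra.
Qed.

Variables (X Om : set vec) (PX PO : vec -> vec) (T : vec -> vec) (L lam : R).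
Hypotheses (convX : convex_set X) (projX : is_projection X PX).
Hypotheses (convO : convex_set Om) (projO : is_projection Om PO) (XO : X `<=` Om).
Hypotheses (lipT : forall u v, Om u -> Om v -> enorm (T u - T v) <= L * enorm (u - v)).
Hypotheses (L0 : 0 <= L) (lam0 : 0 < lam) (lamL : lam * L <= 1).

Lemma extragradient_step z xs yv a : X xs ->
  yv = PX (z - lam *: T (PO z)) -> a = PX (z - lam *: T yv) ->
  dotp (a - xs) (a - xs) <= dotp (z - xs) (z - xs) - 2 * lam * dotp (T yv) (yv - xs).
Proof.
move=> Xxs ey ea.
have Xy : X yv by rewrite ey; exact: (proj_in projX _).
have Xa : X a by rewrite ea; exact: (proj_in projX _).
set g0 := T (PO z); set g1 := T yv.
have pA := proj_variational convX projX (z - lam *: g1) Xxs; rewrite -ea in pA.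
have pB := proj_variational convX projX (z - lam *: g0) Xa; rewrite -ey in pB.
have lip : 2 * lam * dotp (g0 - g1) (a - yv) <=
    dotp (z - yv) (z - yv) + dotp (a - yv) (a - yv).
  have g01 : enorm (g0 - g1) <= L * enorm (z - yv).
    have POz := proj_dist_le convO projO z (XO Xy).
    exact: le_trans (lipT (proj_in projO z) (XO Xy)) (ler_wpM2l L0 POz).
  have p0 := enorm_ge0 (z - yv); have q0 := enorm_ge0 (a - yv).
  have cs := le_trans (cauchy_schwarz (g0 - g1) (a - yv)) (ler_wpM2r q0 g01).
  have := ler_wpM2l (ltW lam0) cs; have := ler_wpM2r (mulr_ge0 p0 q0) lamL.
  (* [2 |z - yv| |a - yv| <= |z - yv|^2 + |a - yv|^2] *)
  have := sqr_ge0 (enorm (z - yv) - enorm (a - yv)).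
  by rewrite -!enorm_sqr; nra.
exact: extragradient_three_point pA pB lip.
Qed.

End Extragradient.

Lemma dotp_inertial (R : realType) (n : nat) (xk xkm xs : 'rV[R]_n) (a : R) :
  dotp (xk + a *: (xk - xkm) - xs) (xk + a *: (xk - xkm) - xs) =
  (1 + a) * dotp (xk - xs) (xk - xs) - a * dotp (xkm - xs) (xkm - xs)
  + a * (1 + a) * dotp (xk - xkm) (xk - xkm).
Proof. by dotp_expand; rewrite (dotpC xkm xk) (dotpC xs xk) (dotpC xs xkm); ring. Qed.

Section InertialTelescope.
Variable R : realFieldType.
Variables (phi r a : nat -> R) (D : R).
Hypotheses (phi_bnd : forall j, 0 <= phi j <= D) (r_gt0 : forall j, 0 < r j).
Hypotheses (r_nondecr : forall j, r j <= r j.+1) (a_ge0 : forall j, 0 <= a j).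
Hypotheses (a0_le1 : a 0%N <= 1) (ar_nonincr : forall j, a j.+1 * r j.+1 <= a j * r j).

Local Notation inertial_gap j := ((1 + a j) * phi j - a j * phi j.-1 - phi j.+1).

(* [phi j.-1] at [j = 0] is [phi 0]: the method starts with [x_{-1} = x_0]. *)
Lemma inertial_weighted_sum_le_invariant k :
  \sum_(j < k) r j * inertial_gap j
   <= (r k.-1 - a k * r k) * D + a k * r k * phi k.-1 - r k.-1 * phi k.
Proof.
elim: k => [|k IH].
  rewrite big_ord0 /=; have /andP[phi0 phiD] := phi_bnd 0%N.
  have : 0 <= r 0%N * (1 - a 0%N) * (D - phi 0%N).
    by rewrite !mulr_ge0 ?subr_ge0 // ltW.
  have := r_gt0 0%N; have := a_ge0 0%N; lra.
rewrite big_ord_recr /=.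
have r_pred : r k.-1 <= r k by case: k {IH}.
have c0 : 0 <= r k + a k * r k - r k.-1 - a k.+1 * r k.+1.
  by have := ar_nonincr k; have := a_ge0 k; have := r_gt0 k; lra.
have /andP[phik phiD] := phi_bnd k.
have : 0 <= (r k + a k * r k - r k.-1 - a k.+1 * r k.+1) * (D - phi k).
  by rewrite mulr_ge0 // subr_ge0.
lra.
Qed.

Lemma inertial_weighted_sum_le k : \sum_(j < k) r j * inertial_gap j <= r k.-1 * D.
Proof.
apply: (le_trans (inertial_weighted_sum_le_invariant k)).
have /andP[phi_km phi_kmD] := phi_bnd k.-1; have /andP[phik _] := phi_bnd k.
have ar0 : 0 <= a k * r k by rewrite mulr_ge0 // ltW.
have := ler_wpM2l ar0 phi_kmD; have := mulr_ge0 (ltW (r_gt0 k.-1)) phik; lra.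
Qed.

End InertialTelescope.

Lemma inertial_sum_le (R : realFieldType) (phi a : nat -> R) (D : R) k :
  (forall j, 0 <= phi j <= D) -> (forall j, 0 <= a j) -> a 0%N <= 1 ->
  (forall j, a j.+1 <= a j) ->
  \sum_(j < k) ((1 + a j) * phi j - a j * phi j.-1 - phi j.+1) <= D.
Proof.
move=> phi_bnd a_ge0 a0_le1 a_nonincr.
have := inertial_weighted_sum_le (r := fun=> 1) phi_bnd (fun=> ltr01) (fun=> lexx 1)
  a_ge0 a0_le1 (fun j => ler_wpM2r ler01 (a_nonincr j)) k.
by rewrite mul1r; under eq_bigr do rewrite mul1r.
Qed.

Section PowerSums.
Variable R : realType.

Lemma powR_onem (k b : R) : 0 < k -> k `^ (1 - b) = k / k `^ b.
Proof. by move=> k0; rewrite powRB ?(gt_eqF k0) ?implybT // powRr1 // ltW. Qed.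

Lemma powR_le_tangent (u r : R) : 0 <= u -> 0 < r < 1 -> u `^ r <= r * u + (1 - r).
Proof.
move=> u0 /andP[r0 r1].
have r0' : 0 < r^-1 by rewrite invr_gt0.
have r1' : 0 < (1 - r)^-1 by rewrite invr_gt0 subr_gt0.
(* Young's inequality for [u ^ r * 1] with exponents [1 / r] and [1 / (1 - r)] *)
have := conjugate_powR (powR_ge0 u r) ler01 r0' r1'.
rewrite !invrK mulr1 powR1 -powRrM mulfV ?gt_eqF // powRr1 // addrC subrK.
by move=> /(_ erefl); lra.
Qed.

(* Tangent line of the concave map [t |-> t ^ (1 - b)] at [j + 1], evaluated at [j]. *)
Lemma inv_powR_le_diff (j : nat) (b : R) : 0 < b < 1 ->
  (j.+1%:R `^ b)^-1 <= (j.+1%:R `^ (1 - b) - j%:R `^ (1 - b)) / (1 - b).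
Proof.
move=> /andP[b0 b1].
set m : R := j.+1%:R; set r := 1 - b.
have m0 : 0 < m by rewrite ltr0Sn.
have jm : j%:R = m - 1 :> R by rewrite /m -natr1 addrK.
clearbody m; rewrite jm.
have r0 : 0 < r by rewrite subr_gt0.
set u := (m - 1) / m.
have u0 : 0 <= u by apply: divr_ge0; rewrite -?jm ?ler0n ?ltW.
have mu : m - 1 = u * m by rewrite divfK ?gt_eqF.
have um : 1 - u = m^-1 by rewrite /u; field; rewrite gt_eqF.
have mb : (m `^ b)^-1 = m `^ r / m.
  by rewrite /r powR_onem //; field; rewrite !gt_eqF ?powR_gt0.
have r01 : 0 < r < 1 by rewrite /r; apply/andP; split; lra.
have mr0 : 0 < m `^ r by rewrite powR_gt0.
have := ler_wpM2r (ltW mr0) (powR_le_tangent u0 r01).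
rewrite mu (powRM _ u0 (ltW m0)) ler_pdivlMr // mb.
have -> : m `^ r / m * r = r * m `^ r * (1 - u) by rewrite um; field; rewrite gt_eqF.
nra.
Qed.

Lemma sum_inv_powR_le (k : nat) (b : R) : 0 < b < 1 ->
  \sum_(j < k) (j.+1%:R `^ b)^-1 <= k%:R `^ (1 - b) / (1 - b).
Proof.
move=> b01; apply: le_trans.
  by apply: ler_sum => j _; have := inv_powR_le_diff j b01; exact.
rewrite -mulr_suml -(big_mkord xpredT (fun j => j.+1%:R `^ (1 - b) - j%:R `^ (1 - b))).
rewrite telescope_sumr // powR0 ?subr0 //.
by case/andP: b01 => _ b1; rewrite gt_eqF // subr_gt0.
Qed.

End PowerSums.

Section GapBounds.
Variables (R : realType) (n : nat).
Notation vec := 'rV[R]_n.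
Implicit Types (A : set vec) (G : vec -> vec) (z : vec).

Lemma monotone_dotp_le D G u v : monotone_map_on D G -> D u -> D v ->
  dotp (G v) (u - v) <= dotp (G u) (u - v).
Proof. by move=> monG Du Dv; have := monG _ _ Du Dv; rewrite dotpDl dotpNl subr_ge0. Qed.

Lemma enorm_le_diam A u v : compact A -> A u -> A v -> enorm (u - v) <= diam A.
Proof.
move=> /compact_enorm_bounded [M AM] Au Av; apply: ub_le_sup; last by exists (u, v).
exists (M + M) => _ [[p1 p2] [/= Ap1 Ap2] <-].
exact: le_trans (enormB_le _ _) (lerD (AM _ Ap1) (AM _ Ap2)).
Qed.

Lemma lipschitz_enorm_le D G (L : R) A a v : compact A -> A `<=` D ->
  lipschitz_map_on D G L -> A a -> A v -> enorm (G v) <= enorm (G a) + `|L| * diam A.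
Proof.
move=> cA AD lipG Aa Av; rewrite -(subrK (G a) (G v)) addrC.
apply: le_trans (enormD_le _ _) _; rewrite lerD2l.
apply: le_trans (lipG _ _ (AD _ Av) (AD _ Aa)) _.
apply: le_trans (ler_wpM2r (enorm_ge0 _) (ler_norm L)) _.
by rewrite ler_wpM2l ?normr_ge0 ?enorm_le_diam.
Qed.

Lemma enorm_le_supnorm G A (B : R) u :
  (forall v, A v -> enorm (G v) <= B) -> A u -> enorm (G u) <= supnorm G A.
Proof. by move=> GB Au; apply: ub_le_sup; [exists B => _ [v Av <-]; apply: GB | exists u]. Qed.

Lemma Gap_ub z G A (C : R) q :
  (forall p, A p -> dotp (G p) (z - p) <= C) -> A q -> dotp (G q) (z - q) <= Gap z G A.
Proof. by move=> GC Aq; apply: ub_le_sup; [exists C => _ [p Ap <-]; apply: GC | exists q]. Qed.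

Lemma Gap_le z G A (C : R) :
  A !=set0 -> (forall p, A p -> dotp (G p) (z - p) <= C) -> Gap z G A <= C.
Proof.
move=> [q Aq] GC; apply: ge_sup; first by exists (dotp (G q) (z - q)), q.
by move=> _ [p Ap <-]; apply: GC.
Qed.

Lemma distS_ge0 z A : A !=set0 -> 0 <= distS z A.
Proof.
move=> [q Aq]; apply: lb_le_inf; first by exists (enorm (z - q)), q.
by move=> _ [p _ <-]; apply: enorm_ge0.
Qed.

Lemma Gap_ge_distS z G A (B C : R) : A !=set0 -> 0 <= B ->
  (forall p, A p -> enorm (G p) <= B) -> (forall p, A p -> dotp (G p) (z - p) <= C) ->
  - B * distS z A <= Gap z G A.
Proof.
move=> A0 B0 GB GC.
have term p : A p -> - B * enorm (z - p) <= Gap z G A.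
  move=> Ap; apply: le_trans (Gap_ub GC Ap).
  have := abs_dotp_le (G p) (z - p); rewrite ler_norml => /andP[+ _].
  by have := ler_wpM2r (enorm_ge0 (z - p)) (GB _ Ap); lra.
have [B_eq0|B_neq0] := eqVneq B 0.
  by case: A0 => p Ap; have := term p Ap; rewrite B_eq0 !mulNr !mul0r.
have B_gt0 : 0 < B by rewrite lt0r B_neq0.
suff : - Gap z G A / B <= distS z A by rewrite ler_pdivrMr //; lra.
apply: lb_le_inf; first by case: A0 => p Ap; exists (enorm (z - p)), p.
by move=> _ [p Ap <-]; rewrite ler_pdivrMr //; have := term p Ap; lra.
Qed.

Lemma weakly_sharp_distS_le F X (sigma M c : R) z :
  0 < sigma -> 0 < M -> weakly_sharp F X sigma M -> VIsol F X !=set0 -> X z ->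
  (forall p, X p -> dotp (F p) (z - p) <= c) ->
  distS z (VIsol F X) <= c `^ (1 / M) / sigma `^ (1 / M).
Proof.
move=> sigma0 M0 sharp [q Qq] Xz Fc.
set d := distS z (VIsol F X).
have d0 : 0 <= d by apply: distS_ge0; exists q.
have dMc : d `^ M * sigma <= c by rewrite mulrC; exact: le_trans (sharp _ _ Qq Xz) (Fc _ Qq.1).
rewrite ler_pdivlMr ?powR_gt0 //.
have -> : d * sigma `^ (1 / M) = (d `^ M * sigma) `^ (1 / M).
  by rewrite powRM ?powR_ge0 ?ltW // -powRrM mul1r mulfV ?gt_eqF // powRr1.
have dMsigma0 : 0 <= d `^ M * sigma by rewrite mulr_ge0 ?powR_ge0 ?ltW.
have c0 : 0 <= c := le_trans dMsigma0 dMc.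
by apply: ge0_ler_powR; rewrite ?nnegrE // divr_ge0 // ltW.
Qed.

End GapBounds.

Section WeightedAverage.
Variables (R : realType) (n : nat).
Variables (lambda : nat -> R) (y : nat -> 'rV[R]_n).
Hypothesis lambda_gt0 : forall j, 0 < lambda j.

Lemma Lam_ge0 k : 0 <= Lam lambda k.
Proof. by apply: sumr_ge0 => j _; apply: ltW. Qed.

Lemma LamS k : Lam lambda k.+1 = Lam lambda k + lambda k.
Proof. by rewrite /Lam big_ord_recr. Qed.

Lemma Lam_gt0 k : (1 <= k)%N -> 0 < Lam lambda k.
Proof. by case: k => // k _; rewrite LamS ltr_wpDl ?Lam_ge0. Qed.

Lemma Lam_ge_mul (lo : R) k : (forall j, lo <= lambda j) -> k%:R * lo <= Lam lambda k.
Proof.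
move=> lo_le; elim: k => [|k IH]; first by rewrite mul0r /Lam big_ord0.
by rewrite LamS -natr1 mulrDl mul1r lerD.
Qed.

Lemma dotp_ybar (g xs : 'rV[R]_n) k : (1 <= k)%N ->
  dotp g (ybar lambda y k - xs) =
  (Lam lambda k)^-1 * \sum_(j < k) lambda j * dotp g (y j - xs).
Proof.
move=> k1; have Lk0 := Lam_gt0 k1.
have -> : ybar lambda y k - xs =
    (Lam lambda k)^-1 *: \sum_(j < k) lambda j *: (y j - xs).
  under eq_bigr do rewrite scalerBr.
  by rewrite sumrB -scaler_suml scalerBr scalerA mulVf ?gt_eqF // scale1r.
rewrite dotpZr dotp_sumr; congr (_ * _).
by apply: eq_bigr => j _; rewrite dotpZr.
Qed.

Lemma ybar_in_convex (X : set 'rV[R]_n) k : convex_set X -> (forall j, X (y j)) ->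
  (1 <= k)%N -> X (ybar lambda y k).
Proof.
move=> convX Xy; case: k => // k _; elim: k => [|k IH].
  by rewrite /ybar /Lam !big_ord1 scalerA mulVf ?gt_eqF // scale1r.
(* [ybar (k + 2)] is a convex combination of [y (k + 1)] and [ybar (k + 1)] *)
have L1 := Lam_gt0 (ltn0Sn k); have L2 := Lam_gt0 (ltn0Sn k.+1).
set t := lambda k.+1 / Lam lambda k.+2.
have t0 : 0 <= t by rewrite divr_ge0 // ltW.
have t1 : t <= 1 by rewrite ler_pdivrMr // mul1r LamS lerDr ltW.
have := convX (y k.+1 : convex_lmodType _) (ybar lambda y k.+1 : convex_lmodType _)
  (Itv01 t0 t1) (mem_set (Xy k.+1)) (mem_set IH).
rewrite in_setE.
suff -> : ybar lambda y k.+2 = t *: y k.+1 + (1 - t) *: ybar lambda y k.+1 by [].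
clear t0 t1; rewrite /ybar [in LHS]big_ord_recr /= -/(Lam lambda k.+2).
move: (\sum_(i < k.+1) lambda i *: y i) => S.
rewrite /t LamS in L2 *.
by apply/rowP => i; rewrite !mxE /=; field; rewrite !gt_eqF.
Qed.

Lemma dotp_ybar_le (g xs : 'rV[R]_n) k (lo S : R) : (1 <= k)%N -> 0 < lo ->
  (forall j, lo <= lambda j) -> 0 <= S ->
  \sum_(j < k) 2 * lambda j * dotp g (y j - xs) <= S ->
  dotp g (ybar lambda y k - xs) <= S / (2 * (k%:R * lo)).
Proof.
move=> k1 lo0 lo_le S0 sumS; rewrite dotp_ybar //.
have klo0 : 0 < k%:R * lo by rewrite mulr_gt0 // ltr0n.
have half_sum : \sum_(j < k) lambda j * dotp g (y j - xs) <= S / 2.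
  rewrite ler_pdivlMr // mulrC mulr_sumr.
  by under eq_bigr do rewrite mulrA.
have Lk0 := Lam_gt0 k1.
have Linv0 : 0 <= (Lam lambda k)^-1 by rewrite invr_ge0 ltW.
apply: le_trans (ler_wpM2l Linv0 half_sum) _.
have -> : S / (2 * (k%:R * lo)) = (k%:R * lo)^-1 * (S / 2).
  by field; rewrite !gt_eqF // ltr0n.
apply: ler_wpM2r; first by rewrite divr_ge0.
by rewrite lef_pV2 ?posrE // Lam_ge_mul.
Qed.

End WeightedAverage.

Lemma partial_sum_le_lim (R : realType) (u : R ^nat) (s : R) k :
  (forall j, 0 <= u j) -> series u @ \oo --> s -> \sum_(j < k) u j <= s.
Proof.
move=> u0 us.
have nd : nondecreasing_seq (series u) by apply: nondecreasing_series => m _ _.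
by have := nondecreasing_cvgn_le nd (cvgP _ us) k; rewrite (cvg_lim _ us) // /series /= big_mkord.
Qed.

Section Rates.
Variable R : realType.
Variables (k lo eta0 b D s : R).
Hypotheses (k_gt0 : 0 < k) (lo_gt0 : 0 < lo) (b_lt1 : b < 1).

Lemma rate_H_le : 0 <= b -> 0 < eta0 -> 0 <= D ->
  (k `^ b / eta0 * D + s) / (2 * (k * lo)) <=
  (k `^ (1 - b))^-1 * (D / (2 `^ (1 - b) * lo * eta0)) + k^-1 * (s / (2 * lo)).
Proof.
move=> b0 eta0_gt0 D0; have kb0 : 0 < k `^ b by rewrite powR_gt0.
have -> : (k `^ b / eta0 * D + s) / (2 * (k * lo)) =
    (k `^ (1 - b))^-1 * (D / (2 * lo * eta0)) + k^-1 * (s / (2 * lo)).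
  by rewrite powR_onem //; field; rewrite !gt_eqF.
rewrite lerD2r; apply: ler_wpM2l; first by rewrite invr_ge0 powR_ge0.
apply: ler_wpM2l => //; rewrite lef_pV2 ?posrE ?mulr_gt0 ?powR_gt0 //.
rewrite -!mulrA; apply: ler_wpM2r; first by rewrite mulr_ge0 // ltW.
by rewrite -[X in _ <= X]powRr1 ?ler0n //; apply: ler_powR; rewrite ?ler1n // gerBl.
Qed.

Lemma rate_F_eq (W : R) :
  (D + s + 2 * W * (k `^ (1 - b) / (1 - b))) / (2 * (k * lo)) =
  k^-1 * (D / (2 * lo)) + k^-1 * (s / (2 * lo)) + (k `^ b)^-1 * (W / ((1 - b) * lo)).
Proof.
have kb0 : 0 < k `^ b by rewrite powR_gt0.
have b1 : 0 < 1 - b by rewrite subr_gt0.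
by rewrite powR_onem //; field; rewrite !gt_eqF.
Qed.

End Rates.

Section IneIREG.
Variables (R : realType) (n : nat).
Notation vec := 'rV[R]_n.
Variables (F H : vec -> vec) (DomF DomH X Omega : set vec) (LF LH : R).
Variables (PX POmega : vec -> vec) (alpha lambda eta : nat -> R).
Variables (eta0 b lam_lo lam_hi s : R) (x y : nat -> vec).

Hypotheses (LF_gt0 : 0 < LF) (LH_gt0 : 0 < LH).
Hypotheses (monF : monotone_map_on DomF F) (lipF : lipschitz_map_on DomF F LF).
Hypotheses (monH : monotone_map_on DomH H) (lipH : lipschitz_map_on DomH H LH).
Hypotheses (compX : compact X) (convX : convex_set X) (convO : convex_set Omega).
Hypotheses (XO : X `<=` Omega) (OD : Omega `<=` DomF `&` DomH).
Hypotheses (projX : is_projection X PX) (projO : is_projection Omega POmega).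
Hypotheses (Q_neq0 : VIsol F X !=set0) (x0_in : X (x 0)).
Hypotheses (alpha_ge0 : forall k, 0 <= alpha k) (lambda_gt0 : forall k, 0 < lambda k).
Hypothesis y_def : forall k, y k = PX (ineW x alpha k -
  lambda k *: (F (POmega (ineW x alpha k)) + eta k *: H (POmega (ineW x alpha k)))).
Hypothesis x_succ : forall k,
  x k.+1 = PX (ineW x alpha k - lambda k *: (F (y k) + eta k *: H (y k))).
Hypotheses (eta0_gt0 : 0 < eta0) (eta0_le1 : eta0 <= 1) (b_gt0 : 0 < b) (b_lt1 : b < 1).
Hypothesis eta_def : forall k, eta k = eta0 / (k.+1%:R `^ b).
Hypothesis alpha0_le1 : alpha 0 <= 1.
Hypothesis alpha_eta_nonincr : forall k, alpha k.+1 / eta k.+1 <= alpha k / eta k.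
Hypotheses (lam_lo_gt0 : 0 < lam_lo) (lam_hi_le : lam_hi <= 1 / (LF + eta0 * LH)).
Hypothesis lambda_bnd : forall k, lam_lo <= lambda k <= lam_hi.
Hypothesis delta_series : series (fun k => ineDelta x alpha k / eta k) @ \oo --> s.

Local Notation Q := (VIsol F X).
Local Notation DX := (diam X).
Local Notation CH := (supnorm H X).
Local Notation BH := (supnorm H Q).
Local Notation Phi xs j := (dotp (x j - xs) (x j - xs)).
Local Notation inertial_gap xs j :=
  ((1 + alpha j) * Phi xs j - alpha j * Phi xs j.-1 - Phi xs j.+1).
Local Notation Hrate k := ((k%:R `^ (1 - b))^-1 * (DX ^+ 2 / (2 `^ (1 - b) * lam_lo * eta0))
  + k%:R^-1 * (s / (2 * lam_lo))).
Local Notation Fbound k := (k%:R^-1 * (DX ^+ 2 / (2 * lam_lo))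
  + k%:R^-1 * (s / (2 * lam_lo))
  + (k%:R `^ b)^-1 * (eta0 * lam_hi * CH * DX / ((1 - b) * lam_lo))).

Lemma x_in j : X (x j).
Proof. by case: j => // j; rewrite x_succ; exact: (proj_in projX _). Qed.

Lemma y_in j : X (y j).
Proof. by rewrite y_def; exact: (proj_in projX _). Qed.

Lemma domF_X u : X u -> DomF u.
Proof. by move=> /XO /OD []. Qed.

Lemma domH_X u : X u -> DomH u.
Proof. by move=> /XO /OD []. Qed.

Lemma eta_gt0 j : 0 < eta j.
Proof. by rewrite eta_def divr_gt0 ?powR_gt0. Qed.

Lemma eta_le_eta0 j : eta j <= eta0.
Proof.
have pb1 : 1 <= j.+1%:R `^ b by have := ler_powR (ler1n R j.+1) (ltW b_gt0); rewrite powRr0.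
by rewrite eta_def ler_pdivrMr ?powR_gt0 // ler_peMr // ltW.
Qed.

Lemma eta_nonincr j : eta j.+1 <= eta j.
Proof.
rewrite !eta_def ler_pM2l // lef_pV2 ?posrE ?powR_gt0 //.
by apply: ge0_ler_powR; rewrite ?nnegrE ?ler_nat ?ltW.
Qed.

Lemma alpha_nonincr j : alpha j.+1 <= alpha j.
Proof.
have := alpha_eta_nonincr j.
rewrite ler_pdivrMr ?eta_gt0 // mulrAC ler_pdivlMr ?eta_gt0 // => h.
rewrite -(ler_pM2r (eta_gt0 j)); apply: le_trans h _.
by rewrite ler_wpM2l ?eta_nonincr.
Qed.

Lemma inv_eta_pred k : (1 <= k)%N -> (eta k.-1)^-1 = k%:R `^ b / eta0.
Proof. by move=> k1; rewrite eta_def prednK // invf_div. Qed.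

Lemma sum_eta_le k : \sum_(j < k) eta j <= eta0 * (k%:R `^ (1 - b) / (1 - b)).
Proof.
under eq_bigr do rewrite eta_def.
rewrite -mulr_sumr; apply: ler_wpM2l; first exact: ltW.
by apply: sum_inv_powR_le; rewrite b_gt0.
Qed.

Lemma Phi_bnd xs j : X xs -> 0 <= Phi xs j <= DX ^+ 2.
Proof.
move=> Xxs; have e := enorm_le_diam compX (x_in j) Xxs.
by rewrite dotpp_ge0 -enorm_sqr ler_pXn2r ?nnegrE ?enorm_ge0 // (le_trans (enorm_ge0 _) e).
Qed.

Lemma enormH_le u : X u -> enorm (H u) <= enorm (H (x 0)) + `|LH| * DX.
Proof. exact: lipschitz_enorm_le compX domH_X lipH x0_in. Qed.

Lemma enormH_le_CH u : X u -> enorm (H u) <= CH.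
Proof. exact: enorm_le_supnorm enormH_le. Qed.

Lemma enormH_le_BH u : Q u -> enorm (H u) <= BH.
Proof. by apply: enorm_le_supnorm => v [Xv _]; apply: enormH_le. Qed.

Lemma BH_ge0 : 0 <= BH.
Proof. by case: Q_neq0 => q Qq; apply: le_trans (enormH_le_BH Qq); apply: enorm_ge0. Qed.

Lemma CH_DX_ge0 : 0 <= CH * DX.
Proof.
rewrite mulr_ge0 //; first exact: le_trans (enorm_ge0 _) (enormH_le_CH x0_in).
exact: le_trans (enorm_ge0 _) (enorm_le_diam compX x0_in x0_in).
Qed.

Lemma lam_hi_ge0 : 0 <= lam_hi.
Proof. by have /andP[_] := lambda_bnd 0; apply: le_trans; apply: ltW. Qed.

Lemma lambda_lipschitz j : lambda j * (LF + eta j * LH) <= 1.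
Proof.
have /andP[_ lam_le] := lambda_bnd j.
have lam_hi_Lip : lam_hi * (LF + eta0 * LH) <= 1.
  by move: lam_hi_le; rewrite ler_pdivlMr // addr_gt0 // mulr_gt0.
apply: le_trans lam_hi_Lip; apply: ler_pM => //; first exact: ltW.
  by rewrite addr_ge0 ?mulr_ge0 ?ltW ?eta_gt0.
by rewrite lerD2l ler_wpM2r ?eta_le_eta0 // ltW.
Qed.

Lemma ineireg_step xs j : X xs ->
  Phi xs j.+1 <= (1 + alpha j) * Phi xs j - alpha j * Phi xs j.-1 + ineDelta x alpha j
    - 2 * lambda j * dotp (F (y j) + eta j *: H (y j)) (y j - xs).
Proof.
move=> Xxs; set L := LF + eta j * LH.
have lipT u v : Omega u -> Omega v ->
    enorm ((F u + eta j *: H u) - (F v + eta j *: H v)) <= L * enorm (u - v).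
  move=> Ou Ov; have [DFu DHu] := OD Ou; have [DFv DHv] := OD Ov.
  have -> : (F u + eta j *: H u) - (F v + eta j *: H v) = (F u - F v) + eta j *: (H u - H v).
    by vec_ring.
  apply: le_trans (enormD_le _ _) _; rewrite enormZ gtr0_norm ?eta_gt0 // mulrDl -mulrA.
  by rewrite lerD ?lipF // ler_wpM2l ?lipH // ltW ?eta_gt0.
have L0 : 0 <= L by rewrite addr_ge0 ?mulr_ge0 // ltW ?eta_gt0.
have := extragradient_step convX projX convO projO XO lipT L0 (lambda_gt0 j)
  (lambda_lipschitz j) Xxs (y_def j) (x_succ j).
by rewrite /ineW dotp_inertial /ineDelta enorm_sqr; lra.
Qed.

Lemma delta_ge0 j : 0 <= ineDelta x alpha j.
Proof. by rewrite /ineDelta mulr_ge0 ?sqr_ge0 // mulr_ge0 ?addr_ge0 ?alpha_ge0. Qed.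

Lemma sum_delta_eta_le k : \sum_(j < k) ineDelta x alpha j / eta j <= s.
Proof.
apply: partial_sum_le_lim delta_series => j.
by rewrite divr_ge0 ?delta_ge0 // ltW ?eta_gt0.
Qed.

Lemma s_ge0 : 0 <= s.
Proof. by have := sum_delta_eta_le 0; rewrite big_ord0. Qed.

Lemma ineireg_step_Q xs j : Q xs ->
  2 * lambda j * dotp (H xs) (y j - xs) <=
  (eta j)^-1 * inertial_gap xs j + ineDelta x alpha j / eta j.
Proof.
move=> [Xxs VIxs]; have step := ineireg_step j Xxs.
have Fy_ge0 : 0 <= dotp (F (y j)) (y j - xs).
  exact: le_trans (VIxs _ (y_in j)) (monotone_dotp_le monF (domF_X (y_in j)) (domF_X Xxs)).
have Hy := monotone_dotp_le monH (domH_X (y_in j)) (domH_X Xxs).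
rewrite (dotpDl (F (y j))) dotpZl in step.
have lam_eta0 : 0 <= lambda j * eta j by rewrite mulr_ge0 // ltW ?eta_gt0.
have := ler_wpM2l lam_eta0 Hy; have := mulr_ge0 (ltW (lambda_gt0 j)) Fy_ge0.
rewrite [_ / eta j]mulrC -mulrDr ler_pdivlMl ?eta_gt0 //.
lra.
Qed.

Lemma ineireg_step_X xs j : X xs ->
  2 * lambda j * dotp (F xs) (y j - xs) <=
  inertial_gap xs j + ineDelta x alpha j + 2 * (lam_hi * CH * DX) * eta j.
Proof.
move=> Xxs; have step := ineireg_step j Xxs.
have Fy := monotone_dotp_le monF (domF_X (y_in j)) (domF_X Xxs).
have Hy_ge : - dotp (H (y j)) (y j - xs) <= CH * DX.
  have := abs_dotp_le (H (y j)) (y j - xs); rewrite ler_norml => /andP[+ _].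
  have := ler_pM (enorm_ge0 _) (enorm_ge0 _) (enormH_le_CH (y_in j))
    (enorm_le_diam compX (y_in j) Xxs).
  lra.
rewrite (dotpDl (F (y j))) dotpZl in step.
have /andP[_ lam_le] := lambda_bnd j.
have etaj0 := ltW (eta_gt0 j); have lamj0 := ltW (lambda_gt0 j).
have : 0 <= lambda j * (dotp (F (y j)) (y j - xs) - dotp (F xs) (y j - xs)).
  by rewrite mulr_ge0 // subr_ge0.
have : 0 <= lambda j * eta j * (CH * DX + dotp (H (y j)) (y j - xs)).
  by rewrite !mulr_ge0 //; lra.
have : 0 <= (lam_hi - lambda j) * eta j * (CH * DX).
  by rewrite mulr_ge0 ?CH_DX_ge0 // mulr_ge0 ?subr_ge0.
lra.
Qed.

Lemma sum_H_le xs k : Q xs -> (1 <= k)%N ->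
  \sum_(j < k) 2 * lambda j * dotp (H xs) (y j - xs) <= k%:R `^ b / eta0 * DX ^+ 2 + s.
Proof.
move=> Qxs k1; apply: le_trans.
  by apply: ler_sum => j _; apply: ineireg_step_Q Qxs.
rewrite big_split /= -(inv_eta_pred k1); apply: lerD; last exact: sum_delta_eta_le.
apply: (inertial_weighted_sum_le (phi := fun j => Phi xs j) (r := fun j => (eta j)^-1)).
- by move=> j; apply: Phi_bnd Qxs.1.
- by move=> j; rewrite invr_gt0 eta_gt0.
- by move=> j; rewrite lef_pV2 ?posrE ?eta_gt0 ?eta_nonincr.
- exact: alpha_ge0.
- exact: alpha0_le1.
- exact: alpha_eta_nonincr.
Qed.

Lemma sum_F_le xs k : X xs ->
  \sum_(j < k) 2 * lambda j * dotp (F xs) (y j - xs) <=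
  DX ^+ 2 + s + 2 * (eta0 * lam_hi * CH * DX) * (k%:R `^ (1 - b) / (1 - b)).
Proof.
move=> Xxs; apply: le_trans.
  by apply: ler_sum => j _; apply: ineireg_step_X Xxs.
rewrite 2!big_split /=; apply: lerD; first apply: lerD.
- exact: inertial_sum_le (fun j => Phi_bnd j Xxs) alpha_ge0 alpha0_le1 alpha_nonincr.
- apply: le_trans (sum_delta_eta_le k); apply: ler_sum => j _.
  rewrite ler_pdivlMr ?eta_gt0 // ler_piMr ?delta_ge0 //.
  exact: le_trans (eta_le_eta0 j) eta0_le1.
- have W0 : 0 <= 2 * (lam_hi * CH * DX).
    by rewrite mulr_ge0 // -mulrA mulr_ge0 ?CH_DX_ge0 ?lam_hi_ge0.
  rewrite -mulr_sumr; apply: le_trans (ler_wpM2l W0 (sum_eta_le k)) _.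
  by rewrite le_eqVlt; apply/orP; left; apply/eqP; ring.
Qed.

Lemma dotp_H_ybar_le xs k : Q xs -> (1 <= k)%N ->
  dotp (H xs) (ybar lambda y k - xs) <= Hrate k.
Proof.
move=> Qxs k1; have k0 : 0 < k%:R :> R by rewrite ltr0n.
apply: le_trans (rate_H_le s k0 lam_lo_gt0 (ltW b_gt0) eta0_gt0 (sqr_ge0 DX)).
apply: dotp_ybar_le (sum_H_le Qxs k1) => //.
- by move=> j; case/andP: (lambda_bnd j).
- by rewrite addr_ge0 ?s_ge0 // mulr_ge0 ?sqr_ge0 // divr_ge0 ?powR_ge0 // ltW.
Qed.

Lemma dotp_F_ybar_le xs k : X xs -> (1 <= k)%N ->
  dotp (F xs) (ybar lambda y k - xs) <= Fbound k.
Proof.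
move=> Xxs k1; have k0 : 0 < k%:R :> R by rewrite ltr0n.
rewrite -(rate_F_eq (DX ^+ 2) s k0 lam_lo_gt0 b_lt1).
apply: dotp_ybar_le (sum_F_le k Xxs) => //.
- by move=> j; case/andP: (lambda_bnd j).
- have W0 : 0 <= eta0 * lam_hi * CH * DX.
    by rewrite -mulrA mulr_ge0 ?CH_DX_ge0 // mulr_ge0 ?lam_hi_ge0 // ltW.
  apply: addr_ge0; first by rewrite addr_ge0 ?sqr_ge0 ?s_ge0.
  apply: mulr_ge0; first exact: mulr_ge0 _ W0.
  by rewrite divr_ge0 ?powR_ge0 // subr_ge0 ltW.
Qed.

Lemma ybar_in k : (1 <= k)%N -> X (ybar lambda y k).
Proof. by move=> k1; have := ybar_in_convex lambda_gt0 convX y_in k1. Qed.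

Lemma ineireg_gap_H k : (1 <= k)%N ->
  - BH * distS (ybar lambda y k) Q <= Gap (ybar lambda y k) H Q /\
  Gap (ybar lambda y k) H Q <= Hrate k.
Proof.
move=> k1; have Hk q : Q q -> dotp (H q) (ybar lambda y k - q) <= Hrate k.
  by move=> Qq; apply: dotp_H_ybar_le.
by split; [apply: Gap_ge_distS Q_neq0 BH_ge0 enormH_le_BH Hk | apply: Gap_le Q_neq0 Hk].
Qed.

Lemma ineireg_gap_F k : (1 <= k)%N ->
  0 <= Gap (ybar lambda y k) F X /\ Gap (ybar lambda y k) F X <= Fbound k.
Proof.
move=> k1; have Fk p : X p -> dotp (F p) (ybar lambda y k - p) <= Fbound k.
  by move=> Xp; apply: dotp_F_ybar_le.
split; last by apply: Gap_le Fk; exists (x 0).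
by case: Q_neq0 => q [Xq VIq]; apply: le_trans (VIq _ (ybar_in k1)) (Gap_ub Fk Xq).
Qed.

Lemma ineireg_gap_H_sharp (sigma M : R) : 0 < sigma -> 1 <= M -> weakly_sharp F X sigma M ->
  forall k, (1 <= k)%N ->
  - (BH / sigma `^ (1 / M)) * Fbound k `^ (1 / M) <= Gap (ybar lambda y k) H Q.
Proof.
move=> sigma0 M1 sharp k k1.
have := weakly_sharp_distS_le sigma0 (lt_le_trans ltr01 M1) sharp Q_neq0 (ybar_in k1)
  (fun p Xp => dotp_F_ybar_le Xp k1).
move=> /(ler_wpM2l BH_ge0) dist_le; apply: le_trans (ineireg_gap_H k1).1.
by rewrite !mulNr lerN2 mulrAC -mulrA.
Qed.

End IneIREG.

Unset Implicit Arguments.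

Theorem theorem3p8 (R : realType) (n : nat)
  (F H : 'rV[R]_n -> 'rV[R]_n) (DomF DomH X Omega : set 'rV[R]_n) (LF LH : R)
  (PX POmega : 'rV[R]_n -> 'rV[R]_n)
  (alpha lambda eta : nat -> R) (eta0 b lam_lo lam_hi s : R)
  (x y : nat -> 'rV[R]_n) :
  0 < LF -> 0 < LH ->
  monotone_map_on DomF F -> lipschitz_map_on DomF F LF ->
  monotone_map_on DomH H -> lipschitz_map_on DomH H LH ->
  X !=set0 -> compact X -> convex_set X ->
  Omega !=set0 -> closed Omega -> convex_set Omega ->
  X `<=` Omega -> Omega `<=` DomF `&` DomH ->
  is_projection X PX -> is_projection Omega POmega ->
  VIsol F X !=set0 ->
  (* IneIREG iteration *)
  X (x 0) ->
  (forall k, 0 <= alpha k) -> (forall k, 0 < lambda k) ->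
  (forall k, y k = PX (ineW x alpha k -
       lambda k *: (F (POmega (ineW x alpha k)) + eta k *: H (POmega (ineW x alpha k))))) ->
  (forall k, x k.+1 = PX (ineW x alpha k - lambda k *: (F (y k) + eta k *: H (y k)))) ->
  (* parameter assumptions *)
  0 < eta0 -> eta0 <= 1 -> 0 < b -> b < 1 ->
  (forall k, eta k = eta0 / (k.+1%:R `^ b)) ->
  0 <= alpha 0 <= 1 ->
  (forall k, alpha k.+1 / eta k.+1 <= alpha k / eta k) ->
  0 < lam_lo -> lam_lo <= lam_hi -> lam_hi <= 1 / (LF + eta0 * LH) ->
  (forall k, lam_lo <= lambda k <= lam_hi) ->
  series (fun k => ineDelta x alpha k / eta k) @ \oo --> s ->
  let Q := VIsol F X in
  let DX := diam X in
  let CH := supnorm H X in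
  let BH := supnorm H Q in
  let Fbound (k : nat) :=
    k%:R^-1 * (DX ^+ 2 / (2 * lam_lo)) + k%:R^-1 * (s / (2 * lam_lo))
    + (k%:R `^ b)^-1 * (eta0 * lam_hi * CH * DX / ((1 - b) * lam_lo)) in
  (* (a) *)
  (forall k : nat, (1 <= k)%N ->
     - BH * distS (ybar lambda y k) Q <= Gap (ybar lambda y k) H Q /\
     Gap (ybar lambda y k) H Q <=
       (k%:R `^ (1 - b))^-1 * (DX ^+ 2 / (2 `^ (1 - b) * lam_lo * eta0))
       + k%:R^-1 * (s / (2 * lam_lo))) /\
  (* (b) *)
  (forall k : nat, (1 <= k)%N ->
     0 <= Gap (ybar lambda y k) F X /\ Gap (ybar lambda y k) F X <= Fbound k) /\
  (* (c) *)
  (forall sigma M : R, 0 < sigma -> 1 <= M -> weakly_sharp F X sigma M ->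
     forall k : nat, (1 <= k)%N ->
       - (BH / sigma `^ (1 / M)) * (Fbound k) `^ (1 / M) <= Gap (ybar lambda y k) H Q).
Proof.
move=> LF0 LH0 monF lipF monH lipH _ compX convX _ _ convO XO OD projX projO Q0 x0
  alpha0 lambda0 y_def x_succ eta0_gt0 eta0_le1 b0 b1 eta_def /andP[_ alpha0_le1]
  alpha_eta lo0 _ lam_hi_le lambda_bnd delta_series Q DX CH BH Fbound.
have gap_H := ineireg_gap_H LF0 LH0 monF lipF monH lipH compX convX convO XO OD
  projX projO Q0 x0 alpha0 lambda0 y_def x_succ eta0_gt0 b0 eta_def alpha0_le1
  alpha_eta lo0 lam_hi_le lambda_bnd delta_series.
have gap_F := ineireg_gap_F LF0 LH0 monF lipF lipH compX convX convO XO OD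
  projX projO Q0 x0 alpha0 lambda0 y_def x_succ eta0_gt0 eta0_le1 b0 b1 eta_def
  alpha0_le1 alpha_eta lo0 lam_hi_le lambda_bnd delta_series.
have gap_H_sharp := ineireg_gap_H_sharp LF0 LH0 monF lipF monH lipH compX convX convO XO OD
  projX projO Q0 x0 alpha0 lambda0 y_def x_succ eta0_gt0 eta0_le1 b0 b1 eta_def
  alpha0_le1 alpha_eta lo0 lam_hi_le lambda_bnd delta_series.
by split; [|split].
Qed.
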